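(* For every $n\ge1$, the $\mathbb{Q}$-space $I(G,* )\cap P^G_n$ is spanned by the elements $m-\alpha(m)$, where $m$ ranges over strongly multilinear monomials of degree $n$ and $\alpha$ over path transformations of $m$.
   Context: Let $G=\{g_1=e,\dots,g_k\}$ be a finite group of order $k$. Index rows/columns of $k\times k$ matrices by $G$, let $E_{a,b}$ be matrix units, $P_g=\sum_{h\in G}E_{h,hg}$, and give $M_k(\mathbb{C})$ the $G$-crossed-product grading $M_k(\mathbb{C})_g=\{DP_g: D\text{ diagonal}\}$, with involution $*$ = transpose. $F=\mathbb{Q}\{x_{i,g},x^*_{i,g}: i\ge1,g\in G\}$ is the free algebra with involution $*$ exchanging $x_{i,g}\leftrightarrow x^*_{i,g}$. $I(G,* )$ is the set of $f\in F$ vanishing under every substitution $x_{i,g}\mapsto A_{i,g}\in M_k(\mathbb{C})_g$, $x^*_{i,g}\mapsto A_{i,g}^T$. $W_n=S_n\times\{\pm1\}^n$ acts on monomials: for $\alpha=(\pi,\gamma)$ and $m=x_{i_1,\sigma_{i_1}}^{\epsilon_{i_1}}\cdots x_{i_n,\sigma_{i_n}}^{\epsilon_{i_n}}$ ($\{i_1,\dots,i_n\}=\{1,\dots,n\}$), $\alpha(m)=x_{\pi(i_1),\sigma_{\pi(i_1)}}^{\delta_{\pi(i_1)}}\cdots x_{\pi(i_n),\sigma_{\pi(i_n)}}^{\delta_{\pi(i_n)}}$ with $\delta_j=\epsilon_j$ if $\gamma_j=1$ and the opposite choice if $\gamma_j=-1$. A strongly multilinear monomial of degree $n$ is $m=x_{j_1,h_1}^{\epsilon_1}\cdots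 x_{j_n,h_n}^{\epsilon_n}$ with $(j_1,\dots,j_n)$ a permutation of $(1,\dots,n)$, $h_r\in G$, $\epsilon_r\in\{\text{nothing},*\}$; $P^G_n$ is the $\mathbb{Q}$-span of all of them. Put $\tau_r=h_r$ if $\epsilon_r$ is nothing, $\tau_r=h_r^{-1}$ if $\epsilon_r=*$; $w(m)=\tau_1\cdots\tau_n$; for $i=j_r$, $s_m(i)=\tau_1\cdots\tau_{r-1}$ if $\epsilon_r$ is nothing and $s_m(i)=\tau_1\cdots\tau_{r-1}h_r^{-1}$ if $\epsilon_r=*$. $\alpha\in W_n$ is a path transformation of $m$ if $w(\alpha(m))=w(m)$ and $s_{\alpha(m)}(i)=s_m(i)$ for all $i$. *)

From HB Require Import structures.
From mathcomp Require Import all_boot all_order all_algebra all_fingroup.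
Set Implicit Arguments. Unset Strict Implicit. Unset Printing Implicit Defensive.
Import Order.TTheory GRing.Theory Num.Theory.
Local Open Scope ring_scope.

(* A strongly multilinear monomial of degree n in the variables
   x_{i,g}, x^*_{i,g} (i in 'I_n, i.e. variables 1..n shifted to 0..n-1).
   Since each variable i occurs exactly once, m is determined by
   - mpos m : {perm 'I_n}, position r  |->  variable j_r occupying it,
   - mlab m : variable i |-> its group label h (= sigma_i),
   - mstar m : variable i |-> true iff it occurs starred (eps_i = * ). *)
Definition mono (n : nat) (gT : finGroupType) :=
  ({perm 'I_n} * {ffun 'I_n -> gT} * {ffun 'I_n -> bool})%type.

Section Mono.
Variables (n : nat) (gT : finGroupType).

Definition mpos (m : mono n gT) : {perm 'I_n} := m.1.1.
Definition mlab (m : mono n gT) : {ffun 'I_n -> gT} := m.1.2.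
Definition mstar (m : mono n gT) : {ffun 'I_n -> bool} := m.2.

(* Action of alpha = (pi, gamma) in W_n = S_n x {+-1}^n; gamma i = true
   encodes gamma_i = -1.  alpha(m) has variable pi(j_r) at position r,
   with the label sigma_{pi(j_r)} and the star flipped iff gamma = -1. *)
Definition Wact (pi : {perm 'I_n}) (gamma : {ffun 'I_n -> bool})
    (m : mono n gT) : mono n gT :=
  ((mpos m * pi)%g, mlab m, [ffun i => mstar m i (+) gamma i]).

Definition tau (m : mono n gT) (r : 'I_n) : gT :=
  let j := mpos m r in if mstar m j then ((mlab m j)^-1)%g else mlab m j.

Definition wm (m : mono n gT) : gT := (\prod_(r < n) tau m r)%g.

Definition sm (m : mono n gT) (i : 'I_n) : gT :=
  let r := ((mpos m)^-1)%g i in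
  ((\prod_(r0 < n | (r0 < r)%N) tau m r0) *
   (if mstar m i then ((mlab m i)^-1)%g else 1))%g.

Definition path_trans (pi : {perm 'I_n}) (gamma : {ffun 'I_n -> bool})
    (m : mono n gT) : bool :=
  (wm (Wact pi gamma m) == wm m) &&
  [forall i, sm (Wact pi gamma m) i == sm m i].

(* Elements of P^G_n: Q-linear combinations of the monomials,
   represented by their coefficient functions. *)
Definition Pn := {ffun mono n gT -> rat}.

Definition basis_el (m : mono n gT) : Pn := [ffun m' => (m' == m)%:R].

Definition Pmx (C : fieldType) (g : gT) : 'M[C]_#|gT| :=
  \matrix_(a, b) ((enum_val b == (enum_val a * g)%g)%:R).

Definition graded (C : fieldType) (g : gT) (M : 'M[C]_#|gT|) : Prop :=
  exists d : 'rV[C]_#|gT|, M = diag_mx d *m Pmx C g.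

Definition eval_mono (C : fieldType) (A : 'I_n -> gT -> 'M[C]_#|gT|)
    (m : mono n gT) : 'M[C]_#|gT| :=
  \big[mulmx/1%:M]_(r < n)
     (let j := mpos m r in
      if mstar m j then (A j (mlab m j))^T else A j (mlab m j)).

Definition eval_Pn (C : numClosedFieldType) (A : 'I_n -> gT -> 'M[C]_#|gT|)
    (f : Pn) : 'M[C]_#|gT| :=
  \sum_(m : mono n gT) ratr (f m) *: eval_mono A m.

Definition in_IG (C : numClosedFieldType) (f : Pn) : Prop :=
  forall A : 'I_n -> gT -> 'M[C]_#|gT|,
    (forall i g, graded g (A i g)) -> eval_Pn A f = 0.

Definition in_path_span (f : Pn) : Prop :=
  exists c : mono n gT * {perm 'I_n} * {ffun 'I_n -> bool} -> rat,
    forall m' : mono n gT,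
      f m' = \sum_(p | path_trans p.1.2 p.2 p.1.1)
               c p * (basis_el p.1.1 m' - basis_el (Wact p.1.2 p.2 p.1.1) m').

End Mono.

From HB Require Import structures.
From mathcomp Require Import all_boot all_order all_algebra all_fingroup.
Set Implicit Arguments. Unset Strict Implicit. Unset Printing Implicit Defensive.
Import GRing.Theory.
Local Open Scope ring_scope.

(* Evaluating a strongly multilinear monomial m on crossed-product graded
   matrices gives a matrix supported on the permutation pattern of w(m): its
   (a, b) entry is [b = a w(m)] times the product, over the variables i, of
   the diagonal entry of the matrix substituted for i at row a s_m(i).  Hence
   the evaluation only depends on the path data (w(m), sigma, s_m), which
   path transformations preserve, and any two monomials with the same path
   data are related by an element of W_n.  Conversely, choosing 0/1
   diagonal entries singles out one path-data class, so an identity has zero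
   coefficient sum on every class, and then f = sum_m f(m) (m - rep(m)) for
   any choice of class representatives rep. *)

HB.instance Definition _ (R : pzRingType) (k : nat) :=
  Monoid.isLaw.Build 'M[R]_k 1%:M (@mulmx R k k k)
    (@mulmxA R k k k k) (@mul1mx R k k) (@mulmx1 R k k).

Section MonomialMatrices.
Variables (gT : finGroupType) (C : fieldType).
Local Notation mx := 'M[C]_#|gT|.

(* The diagonal entry at row a of M = D P_g. *)
Definition diag_coef (M : mx) (g : gT) (a : 'I_#|gT|) : C :=
  M a (enum_rank (enum_val a * g)%g).

Lemma gradedE g M : graded g M ->
  forall a b, M a b = diag_coef M g a * (enum_val b == enum_val a * g)%g%:R.
Proof.
by case=> d -> a b; rewrite /diag_coef !mul_diag_mx !mxE enum_rankK eqxx mulr1.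
Qed.

Lemma trmx_gradedE g M : graded g M ->
  forall a b, M^T a b = diag_coef M g (enum_rank (enum_val a * g^-1)%g) *
                        (enum_val b == enum_val a * g^-1)%g%:R.
Proof.
move=> Mg a b; rewrite mxE (gradedE Mg) /diag_coef.
have -> : (enum_val a == enum_val b * g)%g = (enum_val b == enum_val a * g^-1)%g.
  by apply/eqP/eqP => ->; rewrite ?mulgK ?mulgKV.
have [Eb|] := eqP; last by rewrite !mulr0.
by rewrite -Eb !enum_valK.
Qed.

Lemma big_mulmx_gradedE k (F : nat -> mx) (t : nat -> gT)
    (c : nat -> 'I_#|gT| -> C) :
  (forall r a b, F r a b = c r a * (enum_val b == enum_val a * t r)%g%:R) ->
  forall a b, (\big[mulmx/1%:M]_(0 <= r < k) F r) a b =
    (enum_val b == enum_val a * \prod_(0 <= r < k) t r)%g%:R *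
    \prod_(0 <= r < k) c r (enum_rank (enum_val a * \prod_(0 <= r0 < r) t r0)%g).
Proof.
move=> FE; elim: k => [|k IHk] a b.
  rewrite !big_geq // mxE mulg1 mulr1 (inj_eq enum_val_inj) eq_sym.
  by case: (b == a).
rewrite !big_nat_recr //= mxE.
rewrite (bigD1 (enum_rank (enum_val a * \prod_(0 <= r < k) t r)%g)) //=.
rewrite [X in _ + X]big1 ?addr0 => [|x nx].
  rewrite IHk FE !enum_rankK eqxx mul1r mulgA mulrA.
  by rewrite mulrCA mulrC [X in X * _ = _]mulrC.
rewrite IHk; have [Ex|] := eqP; last by rewrite !mul0r.
by case/eqP: nx; rewrite -Ex enum_valK.
Qed.

End MonomialMatrices.

Section Evaluation.
Variables (gT : finGroupType) (n : nat).
Local Notation mono := (mono n.+1 gT).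

Lemma prefix_tauE (m : mono) (r : 'I_n.+1) :
  (\prod_(r0 < n.+1 | (r0 < r)%N) tau m r0)%g =
  (\prod_(0 <= r0 < r) tau m (inord r0))%g.
Proof.
rewrite (big_nat_widen 0 r n.+1) ?(ltnW (ltn_ord r)) // big_mkord.
by apply: eq_big => [//|i _]; rewrite inord_val.
Qed.

Lemma eval_monoE (C : fieldType) (A : 'I_n.+1 -> gT -> 'M[C]_#|gT|) :
    (forall i g, graded g (A i g)) ->
  forall (m : mono) a b, eval_mono A m a b =
    (enum_val b == enum_val a * wm m)%g%:R *
    \prod_(j < n.+1) diag_coef (A j (mlab m j)) (mlab m j)
                       (enum_rank (enum_val a * sm m j)%g).
Proof.
move=> Agr m a b; rewrite /eval_mono.
pose X r := let j := mpos m r in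
  if mstar m j then (A j (mlab m j))^T else A j (mlab m j).
pose star j : gT := if mstar m j then (mlab m j)^-1%g else 1%g.
rewrite (_ : \big[mulmx/1%:M]_(r < n.+1) _ =
             \big[mulmx/1%:M]_(0 <= r < n.+1) X (inord r)); last first.
  by rewrite big_mkord; apply: eq_bigr => r _; rewrite inord_val.
rewrite (@big_mulmx_gradedE _ _ n.+1 _ (fun r => tau m (inord r))
  (fun r x => let j := mpos m (inord r) in
     diag_coef (A j (mlab m j)) (mlab m j) (enum_rank (enum_val x * star j)%g))).
- congr (_ * _).
    by rewrite /wm big_mkord; congr (_ == _ * _)%g%:R; apply: eq_bigr => r _;
      rewrite inord_val.
  rewrite big_mkord [RHS](reindex_inj (@perm_inj _ (mpos m))) /=.
  apply: eq_bigr => r _; rewrite inord_val /sm permK prefix_tauE enum_rankK.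
  by rewrite mulgA.
- move=> r x y; rewrite /X /tau /star /=.
  case: (mstar m _); first exact: trmx_gradedE.
  by rewrite mulg1 enum_valK; apply: gradedE.
Qed.

End Evaluation.

Section PathData.
Variables (gT : finGroupType) (n : nat).
Local Notation mono := (mono n gT).

Definition path_data (m : mono) := (wm m, mlab m, [ffun i => sm m i]).

Lemma path_transE pi gamma (m : mono) :
  path_trans pi gamma m = (path_data (Wact pi gamma m) == path_data m).
Proof.
rewrite /path_trans /path_data !xpair_eqE eqxx andbT; congr (_ && _).
apply/forallP/eqP => [Es|/ffunP Es i].
  by apply/ffunP => i; rewrite !ffunE; apply/eqP.
by have := Es i; rewrite !ffunE => ->.
Qed.

Definition Wperm (m m' : mono) : {perm 'I_n} := ((mpos m)^-1 * mpos m')%g.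
Definition Wsign (m m' : mono) : {ffun 'I_n -> bool} :=
  [ffun i => mstar m i (+) mstar m' i].

Lemma Wact_connect (m m' : mono) :
  mlab m = mlab m' -> Wact (Wperm m m') (Wsign m m') m = m'.
Proof.
case: m' => [[p l] s]; rewrite /Wact /Wperm /Wsign /mpos /mlab /mstar /= => ->.
by rewrite mulVKg; congr (_, _); apply/ffunP => i; rewrite !ffunE addKb.
Qed.

Definition rep (m : mono) : mono :=
  odflt m [pick x | path_data x == path_data m].

Lemma path_data_rep m : path_data (rep m) = path_data m.
Proof. by rewrite /rep; case: pickP => [x /eqP|]. Qed.

Lemma rep_path_data m1 m2 : path_data m1 = path_data m2 -> rep m1 = rep m2.
Proof.
rewrite /rep => ->; case: pickP => [//|none].
by have := none m2; rewrite eqxx.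
Qed.

Lemma eq_repE m m' :
  (m' == rep m) = (path_data m == path_data m') && (rep m' == m').
Proof.
apply/eqP/andP => [->|[/eqP /rep_path_data -> /eqP //]].
by rewrite path_data_rep (rep_path_data (path_data_rep m)) !eqxx.
Qed.

Lemma Wact_rep m : Wact (Wperm m (rep m)) (Wsign m (rep m)) m = rep m.
Proof. by apply: Wact_connect; case: (path_data_rep m). Qed.

Lemma path_trans_rep m : path_trans (Wperm m (rep m)) (Wsign m (rep m)) m.
Proof. by rewrite path_transE Wact_rep path_data_rep. Qed.

Lemma rep_decomposition (f : Pn n gT) :
    (forall d, \sum_(m | path_data m == d) f m = 0) ->
  forall m', f m' = \sum_m f m * (basis_el m m' - basis_el (rep m) m').
Proof.
move=> class0 m'; under eq_bigr => m _ do rewrite !ffunE mulrBr eq_repE.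
rewrite sumrB (bigD1 m') //= big1 => [|m]; last first.
  by rewrite eq_sym => /negPf ->; rewrite mulr0.
rewrite eqxx mulr1 addr0 (eq_bigr (fun m => (rep m' == m')%:R *
  (if path_data m == path_data m' then f m else 0))) => [|m _].
  by rewrite -mulr_sumr -big_mkcond class0 mulr0 subr0.
by case: (_ == _); case: (_ == _); rewrite ?mulr1 ?mulr0 ?mul1r ?mul0r.
Qed.

End PathData.

Section Identities.
Variables (gT : finGroupType) (C : numClosedFieldType) (n : nat).
Local Notation mono := (mono n.+1 gT).
Local Notation mx := 'M[C]_#|gT|.

Lemma eval_mono_path_data (A : 'I_n.+1 -> gT -> mx) (m m' : mono) :
    (forall i g, graded g (A i g)) ->
  path_data m = path_data m' -> eval_mono A m = eval_mono A m'.
Proof.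
move=> Agr [Ew El /ffunP Es]; apply/matrixP => a b; rewrite !eval_monoE // Ew El.
by congr (_ * _); apply: eq_bigr => j _; have := Es j; rewrite !ffunE => ->.
Qed.

Lemma sum_ratr_basis_el (V : lmodType C) (E : mono -> V) (q : mono) :
  \sum_m ratr (basis_el q m) *: E m = E q.
Proof.
rewrite (bigD1 q) //= big1 => [|m /negPf nq].
  by rewrite ffunE eqxx rmorph_nat mulr1n scale1r addr0.
by rewrite ffunE nq rmorph_nat mulr0n scale0r.
Qed.

Lemma sum_ratr_basis_diff (V : lmodType C) (E : mono -> V) x (q q' : mono) :
  \sum_m ratr (x * (basis_el q m - basis_el q' m)) *: E m =
  ratr x *: (E q - E q').
Proof.
under eq_bigr => m _ do rewrite rmorphM -scalerA rmorphB scalerBl.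
rewrite -scaler_sumr sumrB; congr (_ *: (_ - _)).
  exact: sum_ratr_basis_el.
exact: sum_ratr_basis_el.
Qed.

Lemma path_span_in_IG (f : Pn n.+1 gT) : in_path_span f -> in_IG C f.
Proof.
case=> c fE A Agr; rewrite /eval_Pn.
under eq_bigr => m _ do rewrite fE rmorph_sum scaler_suml.
rewrite exchange_big /=; apply: big1 => -[[m pi] gamma] /= pt.
rewrite path_transE in pt.
by rewrite sum_ratr_basis_diff (eval_mono_path_data Agr (eqP pt)) subrr scaler0.
Qed.

Definition test_mx (d : gT * {ffun 'I_n.+1 -> gT} * {ffun 'I_n.+1 -> gT})
    (i : 'I_n.+1) (g : gT) : mx :=
  diag_mx (\row_x ((g == d.1.2 i) && (enum_val x == d.2 i))%:R) *m Pmx C g.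

Lemma test_mx_graded d i g : graded g (test_mx d i g).
Proof. by eexists. Qed.

Lemma eval_test_mx d (m : mono) :
  eval_mono (test_mx d) m (enum_rank 1%g) (enum_rank d.1.1) =
  (path_data m == d)%:R.
Proof.
rewrite eval_monoE; last exact: test_mx_graded.
rewrite !enum_rankK !mul1g.
under eq_bigr => j _ do
  rewrite /diag_coef /test_mx mul_diag_mx !mxE !enum_rankK eqxx mulr1 mul1g.
have -> : (path_data m == d) =
    (d.1.1 == wm m) && [forall j, (mlab m j == d.1.2 j) && (sm m j == d.2 j)].
  case: d => [[w l] s] /=; rewrite /path_data !xpair_eqE eq_sym -andbA.
  congr (_ && _); apply/andP/forallP => [[/eqP <- /eqP <-] j|all].
    by rewrite ffunE !eqxx.
  by split; apply/eqP/ffunP => j; have /andP[/eqP El /eqP Es] := all j;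
    rewrite ?ffunE.
case: (_ == wm m); last by rewrite mul0r.
rewrite mul1r; case: forallP => [all|/forallP/forallPn[j /negPf nj]].
  by rewrite big1 // => j _; rewrite all.
by rewrite (bigD1 j) //= nj mul0r.
Qed.

Lemma IG_class_sum (f : Pn n.+1 gT) d :
  in_IG C f -> \sum_(m | path_data m == d) f m = 0.
Proof.
move=> fI; have := fI _ (test_mx_graded d).
move/matrixP/(_ (enum_rank 1%g) (enum_rank d.1.1)).
rewrite /eval_Pn summxE mxE; under eq_bigr => m _ do rewrite mxE eval_test_mx.
move=> sum0; apply/eqP; rewrite -(fmorph_eq0 (@ratr C)) rmorph_sum big_mkcond /=.
apply/eqP; rewrite -[RHS]sum0; apply: eq_bigr => m _.
by case: (_ == d); rewrite ?mulr1n ?mulr0n ?mulr1 ?mulr0 ?rmorph0.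
Qed.

Lemma IG_in_path_span (f : Pn n.+1 gT) : in_IG C f -> in_path_span f.
Proof.
move=> fI; pose to_rep (m : mono) := (m, Wperm m (rep m), Wsign m (rep m)).
exists (fun p => if p == to_rep p.1.1 then f p.1.1 else 0) => m'.
rewrite {1}(rep_decomposition (fun d => IG_class_sum d fI) m').
rewrite [RHS](partition_big (fun p => p.1.1) xpredT) //=; apply: eq_bigr => m _.
rewrite (bigD1 (to_rep m)) /=; last by rewrite path_trans_rep eqxx.
rewrite eqxx Wact_rep big1 ?addr0 // => -[[m1 pi] gamma] /=.
case/andP=> /andP[_ /eqP ->] ne.
by rewrite (negPf ne) mul0r.
Qed.

End Identities.

Theorem mainTheorem4 (gT : finGroupType) (C : numClosedFieldType) (n : nat)
  (hn : (0 < n)%N) (f : Pn n gT) :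
  in_IG C f <-> in_path_span f.
Proof.
case: n hn f => // n _ f.
by split; [apply: IG_in_path_span | apply: path_span_in_IG].
Qed.
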